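(* Let $\mathcal{O}$ be an order in $B_p$. Let $\beta_1,\beta_2,\beta_3\in\mathcal{O}^T$ be linearly independent, and let $\alpha_1,\alpha_2,\alpha_3\in\mathcal{O}$ satisfy $2\alpha_i-\mathrm{Tr}(\alpha_i)=\beta_i$ and $\mathrm{Tr}(\alpha_i)\in\{0,1\}$ for each $i$. The following are equivalent: (a) $\beta_1,\beta_2,\beta_3$ attain the successive minima of $\mathcal{O}^T$. (b) $1,\alpha_1,\alpha_2,\alpha_3$ attain the successive minima of $\mathcal{O}$, and whenever $\mathrm{Tr}(\alpha_i)=0$ for some $i\in\{1,2,3\}$, every $\gamma\in\mathcal{O}$ with $N(\gamma)=N(\alpha_i)$ that is linearly independent from $1,\alpha_1,\dots,\alpha_{i-1}$ satisfies $\mathrm{Tr}(\gamma)=0$.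
   Context: $B_p$ is the quaternion algebra over $\mathbb{Q}$ ramified exactly at the prime $p$ and $\infty$, with canonical involution $\overline{x}$, reduced norm $N(x)=x\overline{x}$, reduced trace $\mathrm{Tr}(x)=x+\overline{x}$. The Gross lattice is $\mathcal{O}^T=\{2x-\mathrm{Tr}(x):x\in\mathcal{O}\}$. Both $\mathcal{O}$ (rank 4) and $\mathcal{O}^T$ (rank 3) carry the positive definite quadratic form $N$. For a lattice $\Lambda$ of rank $k$ with positive definite quadratic form $Q$, the $i$-th successive minimum is the minimum value $D_i$ such that the $\mathbb{Z}$-module generated by $\{v\in\Lambda:Q(v)\le D_i\}$ has rank at least $i$; a list $v_1,\dots,v_k$ attains the successive minima if it is linearly independent and $Q(v_i)=D_i$ for each $i$. *)

From HB Require Import structures.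
From mathcomp Require Import all_boot all_order all_algebra.
Set Implicit Arguments. Unset Strict Implicit. Unset Printing Implicit Defensive.
Import Order.TTheory GRing.Theory Num.Theory.
Local Open Scope ring_scope.

(** Quaternion algebra (a,b)_Q with Q-basis 1, i, j, k = ij,
    i^2 = a, j^2 = b, ij = -ji.  An element is its coordinate row vector
    (x0, x1, x2, x3) meaning x0 + x1 i + x2 j + x3 k. *)
Definition quat := 'rV[rat]_4.

Definition qc (x : quat) (n : nat) : rat := x ord0 (inord n).

Definition qmk (r0 r1 r2 r3 : rat) : quat :=
  \row_(k < 4) nth 0 [:: r0; r1; r2; r3] k.

Definition qone : quat := qmk 1 0 0 0.

Definition qmul (a b : rat) (x y : quat) : quat :=
  let x0 := qc x 0 in let x1 := qc x 1 in let x2 := qc x 2 in let x3 := qc x 3 in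
  let y0 := qc y 0 in let y1 := qc y 1 in let y2 := qc y 2 in let y3 := qc y 3 in
  qmk (x0 * y0 + a * x1 * y1 + b * x2 * y2 - a * b * x3 * y3)
      (x0 * y1 + x1 * y0 - b * x2 * y3 + b * x3 * y2)
      (x0 * y2 + x2 * y0 + a * x1 * y3 - a * x3 * y1)
      (x0 * y3 + x3 * y0 + x1 * y2 - x2 * y1).

Definition qconj (x : quat) : quat := qmk (qc x 0) (- qc x 1) (- qc x 2) (- qc x 3).

(** reduced norm N(x) = x * conj x and reduced trace Tr(x) = x + conj x;
    both are scalars (multiples of 1); we return the scalar. *)
Definition qnorm (a b : rat) (x : quat) : rat := qc (qmul a b x (qconj x)) 0.
Definition qtr (x : quat) : rat := qc (x + qconj x) 0.

(** Parameters (a,b) such that (a,b)_Q is the quaternion algebra B_p ramified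
    exactly at p and infinity (standard presentations, cf. Pizer). *)
Definition Bp_params (p : nat) (a b : rat) : Prop :=
  prime p /\
  [\/ [/\ p = 2%N, a = -1 & b = -1],
      [/\ (p %% 4 = 3)%N, a = -1 & b = - p%:R],
      [/\ (p %% 8 = 5)%N, a = -2 & b = - p%:R]
    | (p %% 8 = 1)%N /\
      exists q : nat, [/\ prime q, (q %% 4 = 3)%N, a = - q%:R, b = - p%:R
                        & ~ (exists x : nat, x ^ 2 = p %[mod q])]].

Definition is_order (a b : rat) (O : quat -> Prop) : Prop :=
  (exists E : 'M[rat]_4, E \in unitmx /\
     forall x : quat, O x <-> exists c : 'rV[int]_4, x = map_mx intr c *m E) /\
  O qone /\ (forall x y, O x -> O y -> O (qmul a b x y)).

Definition gross (O : quat -> Prop) (y : quat) : Prop :=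
  exists x, O x /\ y = 2%:R *: x - qtr x *: qone.

Definition rank_ge (L : quat -> Prop) (Q : quat -> rat) (D : rat) (i : nat) : Prop :=
  exists s : seq quat, [/\ size s = i, free s & forall v, v \in s -> L v /\ Q v <= D].

Definition succ_min (L : quat -> Prop) (Q : quat -> rat) (i : nat) (D : rat) : Prop :=
  rank_ge L Q D i /\ forall D', rank_ge L Q D' i -> D <= D'.

Definition attains (L : quat -> Prop) (Q : quat -> rat) (vs : seq quat) : Prop :=
  [/\ free vs, forall v, v \in vs -> L v &
      forall i : nat, (i < size vs)%N -> succ_min L Q i.+1 (Q (nth 0 vs i))].

(* The map x |-> 2 x - Tr x sends O onto O^T, is invariant under x |-> x + 1, and
   satisfies N (2 x - Tr x) = 4 N x - (Tr x)^2; moreover the 2 x_i - Tr x_i are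
   independent iff 1, x_i are.  A free list attains the successive minima iff it is
   greedy: each entry minimizes the form among lattice vectors independent of the
   preceding entries.  On O the norm and trace are integers (N x ^ 2 is the
   determinant of the integral matrix of right multiplication by x), and every coset
   x + Z has a representative of trace 0 or 1; for such representatives
   4 N x - (Tr x)^2 orders them by N first and then prefers trace 1 to trace 0. *)

From HB Require Import structures.
From mathcomp Require Import all_boot all_order all_algebra.
From mathcomp Require Import ring lra zify.
Import Order.TTheory GRing.Theory Num.Theory.
Set Implicit Arguments. Unset Strict Implicit. Unset Printing Implicit Defensive.
Local Open Scope ring_scope.

Lemma qmk0 r0 r1 r2 r3 : qc (qmk r0 r1 r2 r3) 0 = r0.
Proof. by rewrite /qc mxE inordK. Qed.
Lemma qmk1 r0 r1 r2 r3 : qc (qmk r0 r1 r2 r3) 1 = r1.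
Proof. by rewrite /qc mxE inordK. Qed.
Lemma qmk2 r0 r1 r2 r3 : qc (qmk r0 r1 r2 r3) 2 = r2.
Proof. by rewrite /qc mxE inordK. Qed.
Lemma qmk3 r0 r1 r2 r3 : qc (qmk r0 r1 r2 r3) 3 = r3.
Proof. by rewrite /qc mxE inordK. Qed.

Lemma qcD x y n : qc (x + y) n = qc x n + qc y n. Proof. by rewrite /qc mxE. Qed.
Lemma qcN x n : qc (- x) n = - qc x n. Proof. by rewrite /qc mxE. Qed.
Lemma qcZ c x n : qc (c *: x) n = c * qc x n. Proof. by rewrite /qc mxE. Qed.

Lemma qc_ord (x : quat) (i : 'I_4) : x ord0 i = qc x i.
Proof. by rewrite /qc inord_val. Qed.

Definition qcE := (qmk0, qmk1, qmk2, qmk3, qcD, qcN, qcZ).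

Lemma quat_ext (x y : quat) : (forall n, (n < 4)%N -> qc x n = qc y n) -> x = y.
Proof.
move=> Exy; apply/matrixP => i j; rewrite (ord1 i).
by have := Exy j (ltn_ord j); rewrite /qc inord_val.
Qed.

Lemma qtrE x : qtr x = 2 * qc x 0.
Proof. rewrite /qtr /qconj !qcE; ring. Qed.

Lemma qnormE a b x : qnorm a b x =
  qc x 0 ^+ 2 - a * qc x 1 ^+ 2 - b * qc x 2 ^+ 2 + a * b * qc x 3 ^+ 2.
Proof. rewrite /qnorm /qmul /qconj !qcE; ring. Qed.

Lemma qnorm1 a b : qnorm a b qone = 1.
Proof. rewrite qnormE /qone !qcE; ring. Qed.

Lemma qtr_shift x c : qtr (x + c *: qone) = qtr x + 2 * c.
Proof. rewrite !qtrE /qone !qcE; ring. Qed.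

Lemma qnorm_shift a b x c :
  qnorm a b (x + c *: qone) = qnorm a b x + c * qtr x + c ^+ 2.
Proof. rewrite !qnormE qtrE /qone !qcE; ring. Qed.

Lemma qnorm_gt0 a b x : a < 0 -> b < 0 -> x != 0 -> 0 < qnorm a b x.
Proof.
move=> a_lt0 b_lt0; apply: contraNT; rewrite -leNgt qnormE => N_le0.
have ab_gt0 : 0 < a * b by rewrite nmulr_rgt0.
have := sqr_ge0 (qc x 0); have := sqr_ge0 (qc x 1).
have := sqr_ge0 (qc x 2); have := sqr_ge0 (qc x 3) => s3 s2 s1 s0.
have coord_sqr0 : forall n, (n < 4)%N -> qc x n ^+ 2 = 0.
  by case=> [|[|[|[|]]]] // _; apply/eqP; rewrite eq_le sqr_ge0 andbT; nra.
apply/eqP/quat_ext => n /coord_sqr0 /eqP; rewrite sqrf_eq0 => /eqP ->.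
by rewrite /qc mxE.
Qed.

Lemma Bp_params_neg p a b : Bp_params p a b -> a < 0 /\ b < 0.
Proof.
case=> p_prime; have p_gt0 : (0 < p)%N by apply: prime_gt0.
case=> [[_ -> ->]|[_ -> ->]|[_ -> ->]|[_ [q [q_prime _ -> -> _]]]].
all: by rewrite !oppr_lt0 ?ltr0n ?prime_gt0.
Qed.

Lemma det_Qint (R : archiNumDomainType) n (M : 'M[R]_n) :
  (forall i j, M i j \is a Num.int) -> \det M \is a Num.int.
Proof.
move=> M_int; apply: rpred_sum => s _.
by apply: rpredM; [exact: rpred_sign | apply: rpred_prod].
Qed.

Lemma Qint_sqr (q : rat) : q ^+ 2 \is a Num.int -> q \is a Num.int.
Proof.
case/intrP => z q2E; rewrite Qint_def.
have qE := numqE q; set n := numq q in qE *; set d := denq q in qE *.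
have n2E : n ^+ 2 = z * d ^+ 2.
  by apply: (@intr_inj rat); rewrite intrM !expr2 !intrM qE -q2E; ring.
have d_dvd : (`|d| %| `|n| ^ 2)%N.
  by rewrite -abszX n2E abszM abszX dvdn_mull // dvdn_exp.
have d_cop : coprime `|d| (`|n| ^ 2) by rewrite coprimeXr // coprime_sym coprime_num_den.
have d1 : `|d|%N = 1%N by move: d_cop; rewrite /coprime (gcdn_idPl d_dvd) => /eqP.
by rewrite -[d]absz_denq d1.
Qed.

Lemma Qint_lt_succ (R : archiNumDomainType) (x y : R) :
  x \is a Num.int -> y \is a Num.int -> x < y -> x + 1 <= y.
Proof.
move=> x_int y_int lt_xy; rewrite addrC -lerBrDr.
have yx_neq0 : y - x != 0 by rewrite subr_eq0 gt_eqF.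
have := norm_intr_ge1 (rpredB y_int x_int) yx_neq0.
by rewrite ger0_norm // subr_ge0 ltW.
Qed.

Section Det.
Variable R : comRingType.

Lemma minor_coef n (M : 'M[R]_n.+1) (m : nat -> nat -> R) :
  (forall i j, M i j = m i j) ->
  forall i0 j0 (i j : 'I_n), row' i0 (col' j0 M) i j = m (bump i0 i) (bump j0 j).
Proof. by move=> Mm i0 j0 i j; rewrite !mxE Mm. Qed.

Lemma det_mx33 (M : 'M[R]_3) (m : nat -> nat -> R) :
  (forall i j, M i j = m i j) ->
  \det M = m 0 0 * (m 1 1 * m 2 2 - m 1 2 * m 2 1)
         - m 0 1 * (m 1 0 * m 2 2 - m 1 2 * m 2 0)
         + m 0 2 * (m 1 0 * m 2 1 - m 1 1 * m 2 0).
Proof.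
move=> Mm; rewrite (expand_det_row _ ord0) !big_ord_recl big_ord0 /cofactor.
rewrite !(expand_det_row _ ord0) !big_ord_recl !big_ord0 /cofactor.
by rewrite !det_mx11 !mxE !Mm /=; ring.
Qed.

End Det.

Definition rmul_coef (a b : rat) (x : quat) (i j : nat) : rat :=
  let x0 := qc x 0 in let x1 := qc x 1 in let x2 := qc x 2 in let x3 := qc x 3 in
  nth 0 (nth [::] [:: [:: x0; x1; x2; x3];
                      [:: a * x1; x0; a * x3; x2];
                      [:: b * x2; - (b * x3); x0; - x1];
                      [:: - (a * b * x3); b * x2; - (a * x1); x0]] i) j.

Definition rmul_mx a b x : 'M[rat]_4 := \matrix_(i, j) rmul_coef a b x i j.

Lemma rmul_mxE a b x i j : rmul_mx a b x i j = rmul_coef a b x i j.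
Proof. by rewrite mxE. Qed.

Lemma mul_rmul_mx a b (x y : quat) : y *m rmul_mx a b x = qmul a b y x.
Proof.
apply: quat_ext => n n_lt4.
rewrite [LHS]/qc mxE !big_ord_recl big_ord0 !rmul_mxE /rmul_coef /= /qmul.
by case: n n_lt4 => [|[|[|[|]]]] // _; rewrite !qcE inordK //= !qc_ord; ring.
Qed.

Lemma det_rmul_mx a b x : \det (rmul_mx a b x) = qnorm a b x ^+ 2.
Proof.
rewrite qnormE (expand_det_row _ ord0) !big_ord_recl big_ord0 /cofactor.
pose minor i0 j0 i j := rmul_coef a b x (bump i0 i) (bump j0 j).
(* [m] is given explicitly: [?m (val i) (val j)] is not a unification pattern. *)
rewrite !(det_mx33 (m := minor _ _) (minor_coef (rmul_mxE a b x) _ _)).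
by rewrite !rmul_mxE /minor /rmul_coef /=; ring.
Qed.

Section Order.
Variables (a b : rat) (O : quat -> Prop).
Hypothesis O_order : is_order a b O.

Lemma order_lattice : exists E : 'M[rat]_4, E \in unitmx /\
  forall x : quat, O x <-> exists c : 'rV[int]_4, x = map_mx intr c *m E.
Proof. by case: O_order. Qed.

Lemma order1 : O qone. Proof. by case: O_order => _ []. Qed.

Lemma orderM x y : O x -> O y -> O (qmul a b x y).
Proof. by case: O_order => _ [_]; apply. Qed.

Lemma orderD x y : O x -> O y -> O (x + y).
Proof.
have [E [_ OE]] := order_lattice.
move=> /OE [c ->] /OE [c' ->]; apply/OE; exists (c + c').
by rewrite raddfD mulmxDl.
Qed.

Lemma orderZ (z : int) x : O x -> O (z%:~R *: x).
Proof.
have [E [_ OE]] := order_lattice.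
move=> /OE [c ->]; apply/OE; exists (z *: c).
by rewrite scalemxAl; congr (_ *m _); apply/matrixP => i j; rewrite !mxE intrM.
Qed.

Lemma order_shift (z : int) x : O x -> O (x + z%:~R *: qone).
Proof. by move=> Ox; apply: orderD => //; apply/orderZ/order1. Qed.

Lemma qnorm_Qint x : O x -> qnorm a b x \is a Num.int.
Proof.
have [E [E_unit OE]] := order_lattice; move=> Ox.
have conj_int i j : (E *m rmul_mx a b x *m invmx E) i j \is a Num.int.
  have /OE [c c_E] : O (qmul a b (row i E) x).
    by apply: orderM => //; apply/OE; exists (delta_mx 0 i); rewrite map_delta_mx -rowE.
  suff : row i (E *m rmul_mx a b x *m invmx E) 0 j \is a Num.int by rewrite mxE.
  by rewrite !row_mul mul_rmul_mx c_E mulmxK // mxE intr_int.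
apply: Qint_sqr; have := det_Qint conj_int.
rewrite !det_mulmx det_inv det_rmul_mx mulrAC divrr ?mul1r // -unitmxE.
Qed.

Lemma qtr_Qint x : O x -> qtr x \is a Num.int.
Proof.
move=> Ox; have := qnorm_Qint (order_shift 1 Ox).
by rewrite qnorm_shift mul1r expr1n addrAC rpredDl // rpredD ?qnorm_Qint.
Qed.

End Order.

Lemma subseq_take (T : eqType) (s : seq T) i j :
  (i <= j)%N -> subseq (take i s) (take j s).
Proof. by move=> le_ij; rewrite -(take_takel s le_ij) take_subseq. Qed.

Lemma mem_take_nth (T : eqType) (x0 : T) s n w : (n <= size s)%N ->
  w \in take n s -> exists2 i, (i < n)%N & w = nth x0 s i.
Proof.
move=> le_ns /(nthP x0) [i]; rewrite size_takel // => lt_in <-.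
by exists i; rewrite ?nth_take.
Qed.

Section FreeSeq.
Variables (K : fieldType) (vT : vectType K).
Implicit Types s t u : seq vT.

Lemma subseq_free s t : subseq s t -> free t -> free s.
Proof.
elim: t s => [|x t IHt] [|y s] //=; rewrite ?nil_free //.
case: eqP => [-> s_t | _ ys_t]; rewrite free_cons => /andP [x_nspan free_t].
  rewrite free_cons IHt // andbT; apply: contra x_nspan.
  by apply/subvP/sub_span; apply: mem_subseq.
exact: IHt.
Qed.

Lemma free_rcons_take_nth s i j : free s -> (i <= j < size s)%N ->
  free (rcons (take i s) (nth 0 s j)).
Proof.
move=> free_s /andP [le_ij lt_js]; apply: subseq_free free_s.
apply: subseq_trans (take_subseq s j.+1).
by rewrite (take_nth 0) // -!cats1 cat_subseq ?subseq_take.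
Qed.

Lemma free_rcons_exchange u t : free u -> free t -> (size u < size t)%N ->
  exists2 v, v \in t & free (rcons u v).
Proof.
move=> free_u free_t lt_ut; apply/hasP; apply: contraTT lt_ut => /hasPn t_span.
have /dimvS : (<<t>> <= <<u>>)%VS.
  apply/span_subvP => v /t_span; apply: contraNT => v_nspan.
  by rewrite -cats1 (perm_free (permEl (perm_catC _ _))) /= free_cons v_nspan.
by move/eqP: free_t => ->; move/eqP: free_u => ->; rewrite -leqNgt.
Qed.

End FreeSeq.

Section SuccessiveMinima.
Variables (L : quat -> Prop) (Q : quat -> rat).

Lemma succ_min_mono i j D D' :
  (i <= j)%N -> succ_min L Q i D -> succ_min L Q j D' -> D <= D'.
Proof.
move=> le_ij [_ minD] [[s [size_s free_s s_D']] _]; apply: minD.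
exists (take i s); split; first by rewrite size_takel ?size_s.
  exact: subseq_free (take_subseq s i) free_s.
by move=> v /mem_take /s_D'.
Qed.

Definition greedy_min (X : seq quat) :=
  forall j, (j < size X)%N -> forall v, L v -> free (rcons (take j X) v) ->
    Q (nth 0 X j) <= Q v.

Lemma attains_greedy X : attains L Q X -> greedy_min X.
Proof.
case=> free_X X_L minX; elim=> [|k IHk] lt_kX v Lv free_v.
  have [_ min1] := minX 0%N lt_kX; apply: min1.
  by exists [:: v]; split=> // [|w /[1!inE] /eqP ->//]; rewrite take0 in free_v.
have lt'_kX : (k < size X)%N by apply: ltnW.
have [le_kv | lt_vk] := lerP (Q (nth 0 X k)) (Q v); last first.
  have free_kv : free (rcons (take k X) v).
    by apply: subseq_free free_v; rewrite -!cats1 cat_subseq ?subseq_take.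
  by have := IHk lt'_kX v Lv free_kv; rewrite leNgt lt_vk.
have [_ min_k2] := minX k.+1 lt_kX; apply: min_k2.
exists (rcons (take k.+1 X) v); split=> //; first by rewrite size_rcons size_takel.
move=> w; rewrite mem_rcons inE => /predU1P [-> // | /(mem_take_nth 0 lt'_kX) [i lt_ik ->]].
split; first by apply/X_L/mem_nth/(leq_trans lt_ik).
apply: le_trans le_kv; apply: succ_min_mono (minX i _) (minX k _) => //.
exact: leq_trans lt_ik lt'_kX.
Qed.

Lemma greedy_attains X :
  free X -> (forall v, v \in X -> L v) -> greedy_min X -> attains L Q X.
Proof.
move=> free_X X_L greedy_X; split=> // j lt_jX; split.
  exists (take j.+1 X); split; first by rewrite size_takel.
    exact: subseq_free (take_subseq X _) free_X.
  move=> w /(mem_take_nth 0 lt_jX) [i le_ij ->].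
  have lt_iX : (i < size X)%N by apply: leq_ltn_trans lt_jX.
  split; first exact/X_L/mem_nth.
  apply: greedy_X => //; first exact/X_L/mem_nth.
  by apply: free_rcons_take_nth; rewrite // -ltnS le_ij.
move=> D [s [size_s free_s s_D]].
have [|v v_s free_v] := free_rcons_exchange (subseq_free (take_subseq X j) free_X) free_s.
  by rewrite size_s size_takel // ltnW.
have [Lv Qv_le] := s_D v v_s; exact: le_trans (greedy_X j lt_jX v Lv free_v) Qv_le.
Qed.

Lemma attainsE X :
  attains L Q X <-> [/\ free X, forall v, v \in X -> L v & greedy_min X].
Proof.
split; last by case=> *; apply: greedy_attains.
by move=> attX; have [free_X X_L _] := attX; split=> //; apply: attains_greedy.
Qed.

End SuccessiveMinima.

Definition gross_of (x : quat) : quat := 2%:R *: x - qtr x *: qone.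

Lemma gross_of_shift x c : gross_of (x + c *: qone) = gross_of x.
Proof.
apply: quat_ext => n _; rewrite /gross_of qtr_shift qtrE /qone !qcE; ring.
Qed.

Lemma qnorm_gross_of a b x :
  qnorm a b (gross_of x) = 4%:R * qnorm a b x - qtr x ^+ 2.
Proof. rewrite /gross_of !qnormE qtrE /qone !qcE; ring. Qed.

Lemma span_coord0 (T : seq quat) v :
  {in T, forall w, qc w 0 = 0} -> v \in <<T>>%VS -> qc v 0 = 0.
Proof.
move=> T0 v_T; rewrite (@coord_span _ _ _ (in_tuple T) _ v_T) /qc summxE big1 // => i _.
by rewrite mxE -/(qc _ 0) T0 ?mulr0 // mem_nth.
Qed.

Lemma free_gross_of T : free (map gross_of T) = free (qone :: T).
Proof.
have span_eq : <<qone :: map gross_of T>>%VS = <<qone :: T>>%VS.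
  have one_in U : qone \in <<qone :: U>>%VS by rewrite memv_span ?mem_head.
  apply/eqP; rewrite eqEsubv; apply/andP; split; apply/span_subvP => w;
    rewrite inE => /predU1P [-> // | ].
    case/mapP => y y_T ->; apply/memvB/memvZ/one_in.
    by apply/memvZ/memv_span; rewrite inE y_T orbT.
  move=> w_T; have -> : w = 2%:R^-1 *: (gross_of w + qtr w *: qone).
    by rewrite /gross_of subrK scalerA mulVf ?scale1r // pnatr_eq0.
  apply/memvZ/memvD; last exact/memvZ/one_in.
  by apply: memv_span; rewrite inE map_f ?orbT.
have one_nspan : qone \notin <<map gross_of T>>%VS.
  apply/negP => /span_coord0 one0.
  suff : qc qone 0 = 0 by rewrite /qone qmk0 => /eqP; rewrite oner_eq0.
  by apply: one0 => _ /mapP [y _ ->]; rewrite /gross_of qtrE /qone !qcE; ring.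
have <- : free (qone :: map gross_of T) = free (map gross_of T).
  by rewrite free_cons one_nspan.
by rewrite /free span_eq /= size_map.
Qed.

Lemma free_rcons_gross_of S x :
  free (rcons (map gross_of S) (gross_of x)) = free (rcons (qone :: S) x).
Proof. by rewrite -map_rcons free_gross_of. Qed.

(* For n = N x and t = Tr x, 4 n - t^2 is N (2 x - Tr x). *)
Section GrossNormLex.
Variable R : archiRealFieldType.
Implicit Types n m t s : R.

Lemma le_gross_norm_lex n m t s : n \is a Num.int -> m \is a Num.int ->
  t = 0 \/ t = 1 -> 4 * n - t ^+ 2 <= 4 * m - s ^+ 2 ->
  n <= m /\ (n = m -> t = 0 -> s = 0).
Proof.
move=> n_int m_int t01 le_nm; have s2_ge0 := sqr_ge0 s; split=> [|nm t0].
  rewrite leNgt; apply/negP => /(Qint_lt_succ m_int n_int).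
  by case: t01 le_nm => -> le_nm; lra.
apply/eqP; rewrite -sqrf_eq0 eq_le s2_ge0 andbT; move: le_nm; rewrite nm t0; lra.
Qed.

Lemma lex_le_gross_norm n m t s : n \is a Num.int -> m \is a Num.int ->
  t = 0 \/ t = 1 -> s = 0 \/ s = 1 -> n <= m -> (n = m -> t = 0 -> s = 0) ->
  4 * n - t ^+ 2 <= 4 * m - s ^+ 2.
Proof.
move=> n_int m_int t01 s01 le_nm tie.
have [/(Qint_lt_succ n_int m_int) lt_nm | le_mn] := ltrP n m.
  by case: t01 => ->; case: s01 => ->; lra.
have nm : n = m by apply/le_anti/andP.
case: t01 => t0; last by rewrite t0 nm; case: s01 => ->; lra.
by rewrite (tie nm t0) t0 nm; lra.
Qed.

End GrossNormLex.

Section GrossMinima.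
Variables (a b : rat) (O : quat -> Prop).
Hypothesis O_order : is_order a b O.
Notation N := (qnorm a b).

Lemma qtr_shift01 w : O w -> exists z : int,
  qtr (w + z%:~R *: qone) = 0 \/ qtr (w + z%:~R *: qone) = 1.
Proof.
move=> Ow; have /intrP [t trE] := qtr_Qint O_order Ow.
exists (- (t %/ 2)%Z); rewrite qtr_shift trE.
have -> : t%:~R + 2 * (- (t %/ 2)%Z)%:~R = ((t %% 2)%Z)%:~R :> rat.
  by rewrite {1}(divz_eq t 2) intrD intrM intrN; ring.
have : (t %% 2 = 0)%Z \/ (t %% 2 = 1)%Z by have := modz_ge0 t; have := ltz_pmod t; lia.
by case=> ->; [left | right].
Qed.

Lemma gross_minimal_iff (P : quat -> Prop) al :
  (forall w (z : int), P (w + z%:~R *: qone) <-> P w) ->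
  O al -> qtr al = 0 \/ qtr al = 1 ->
  (forall w, O w -> P w -> N (gross_of al) <= N (gross_of w)) <->
  (forall w, O w -> P w -> N al <= N w) /\
  (qtr al = 0 -> forall w, O w -> N w = N al -> P w -> qtr w = 0).
Proof.
move=> P_shift Oal tr_al; have Nal_int := qnorm_Qint O_order Oal.
split=> [minT | [minO tie] w Ow Pw].
  have lex w : O w -> P w -> N al <= N w /\ (N al = N w -> qtr al = 0 -> qtr w = 0).
    move=> Ow Pw; have := minT w Ow Pw; rewrite !qnorm_gross_of.
    exact: le_gross_norm_lex Nal_int (qnorm_Qint O_order Ow) tr_al.
  split=> [w Ow Pw | tr0 w Ow Nw Pw]; first by case: (lex w Ow Pw).
  exact: (lex w Ow Pw).2 (esym Nw) tr0.
have [z tr_w'] := qtr_shift01 Ow; rewrite -(gross_of_shift w z%:~R) !qnorm_gross_of.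
set w' := w + z%:~R *: qone in tr_w' *.
have Ow' : O w' by apply: (order_shift O_order).
have Pw' : P w' by apply/P_shift.
apply: lex_le_gross_norm Nal_int (qnorm_Qint O_order Ow') tr_al tr_w' (minO w' Ow' Pw') _.
by move=> Neq tr0; apply: tie tr0 w' Ow' (esym Neq) Pw'.
Qed.

Lemma qnorm_ge1 v : a < 0 -> b < 0 -> O v -> v != 0 -> 1 <= N v.
Proof.
move=> a_lt0 b_lt0 Ov v_neq0; rewrite -[1]add0r.
by apply: Qint_lt_succ; rewrite ?rpred0 ?(qnorm_Qint O_order) ?qnorm_gt0.
Qed.

Lemma greedy_gross_iff A : a < 0 -> b < 0 ->
  {in A, forall v, O v /\ (qtr v = 0 \/ qtr v = 1)} ->
  greedy_min (gross O) N (map gross_of A) <->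
  greedy_min O N (qone :: A) /\
  (forall i, (i < size A)%N -> qtr (nth 0 A i) = 0 ->
     forall g, O g -> N g = N (nth 0 A i) ->
       free (rcons (qone :: take i A) g) -> qtr g = 0).
Proof.
move=> a_lt0 b_lt0 A_ok.
pose indep j w := free (rcons (qone :: take j A) w).
have indep_shift j w (z : int) : indep j (w + z%:~R *: qone) <-> indep j w.
  by rewrite /indep -!free_rcons_gross_of gross_of_shift.
have minimal_iff j (lt_jA : (j < size A)%N) :=
  let: conj O_aj tr_aj := A_ok _ (mem_nth 0 lt_jA) in
  gross_minimal_iff (indep_shift j) O_aj tr_aj.
split=> [greedyT | [greedyO tie] j].
  have minT j (lt_jA : (j < size A)%N) w : O w -> indep j w ->
      N (gross_of (nth 0 A j)) <= N (gross_of w).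
    move=> Ow; rewrite /indep -free_rcons_gross_of -(nth_map 0 0 _ lt_jA) map_take.
    by apply: greedyT; [rewrite size_map | exists w].
  split=> [[|j] lt_jA v Ov free_v | j lt_jA].
  - by rewrite qnorm1 qnorm_ge1 // -seq1_free.
  - exact: ((minimal_iff j lt_jA).1 (minT j lt_jA)).1 v Ov free_v.
  - exact: ((minimal_iff j lt_jA).1 (minT j lt_jA)).2.
rewrite size_map => lt_jA _ [w [Ow ->]].
rewrite (nth_map 0) // -map_take free_rcons_gross_of.
exact: (minimal_iff j lt_jA).2 (conj (greedyO j.+1 lt_jA) (tie j lt_jA)) w Ow.
Qed.

End GrossMinima.

Unset Implicit Arguments.

Theorem lemma3p7 (p : nat) (a b : rat) (O : quat -> Prop)
  (b1 b2 b3 a1 a2 a3 : quat) :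
  Bp_params p a b ->
  is_order a b O ->
  gross O b1 -> gross O b2 -> gross O b3 ->
  free [:: b1; b2; b3] ->
  O a1 -> O a2 -> O a3 ->
  2%:R *: a1 - qtr a1 *: qone = b1 ->
  2%:R *: a2 - qtr a2 *: qone = b2 ->
  2%:R *: a3 - qtr a3 *: qone = b3 ->
  (qtr a1 = 0 \/ qtr a1 = 1) ->
  (qtr a2 = 0 \/ qtr a2 = 1) ->
  (qtr a3 = 0 \/ qtr a3 = 1) ->
  (attains (gross O) (qnorm a b) [:: b1; b2; b3] <->
   attains O (qnorm a b) [:: qone; a1; a2; a3] /\
   (forall i : nat, (i < 3)%N ->
      qtr (nth 0 [:: a1; a2; a3] i) = 0 ->
      forall g : quat, O g ->
        qnorm a b g = qnorm a b (nth 0 [:: a1; a2; a3] i) ->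
        free (rcons (qone :: take i [:: a1; a2; a3]) g) ->
        qtr g = 0)).
Proof.
move=> Bp O_order _ _ _ free_B O1 O2 O3 E1 E2 E3 tr1 tr2 tr3; subst b1 b2 b3.
have [a_lt0 b_lt0] := Bp_params_neg Bp.
set A := [:: a1; a2; a3].
have A_ok : {in A, forall v, O v /\ (qtr v = 0 \/ qtr v = 1)}.
  by move=> v; rewrite !inE => /or3P [] /eqP ->; split.
have greedyE := greedy_gross_iff O_order a_lt0 b_lt0 A_ok.
have {}free_B : free (map gross_of A) := free_B.
rewrite -[[:: _; _; _]]/(map gross_of A).
have free_A : free (qone :: A) by rewrite -free_gross_of.
split=> [/attainsE [_ _ /greedyE [greedyO tie]] | [/attainsE [_ _ greedyO] tie]].
  split=> //; apply/attainsE; split=> // v /predU1P [-> | /A_ok [] //].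
  exact: order1 O_order.
apply/attainsE; split=> //; last exact/greedyE.
by move=> _ /mapP [v /A_ok [Ov _] ->]; exists v.
Qed.
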